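(* Let $\mathcal N$ be an orchard network and let $\mathcal N=\mathcal N_0,\mathcal N_1,\dots,\mathcal N_\ell$ be a maximal cherry-reduction sequence of $\mathcal N$. Then this sequence is complete, i.e. $\mathcal N_\ell$ consists of a single vertex.
   Context: A phylogenetic network on $X$ ($X$ non-empty finite) is a rooted acyclic directed graph with no parallel arcs such that: the unique root has in-degree $0$ and out-degree $2$; every vertex of out-degree $0$ has in-degree $1$, and the set of such vertices (leaves) is $X$; every other vertex has either in-degree $1$ and out-degree $2$ (tree vertex) or in-degree $2$ and out-degree $1$ (reticulation). If $|X|=1$ a single vertex is also allowed. For a $2$-element subset $\{a,b\}\subseteq X$ with parents $p_a,p_b$: $\{a,b\}$ is a cherry if $p_a=p_b$; it is a reticulated cherry with reticulation leaf $b$ if $p_b$ is a reticulation and $(p_a,p_b)$ is an arc. Reducing $b$ in a cherry means deleting $b$ and suppressing the resulting vertex of in-degree 1 and out-degree 1 (if the common parent is the root, delete $b$ and the root, leaving the single vertex $a$). Cutting a reticulated cherry $\{a,b\}$ means deleting the arc $(p_a,p_b)$ and suppressing the two resulting vertices of in-degree 1 and out-degree 1. These are cherry reductions. A cherry-reduction sequence of $\mathcal N$ is a sequence $\mathcal N=\mathcal N_0,\dots,\mathcal N_k$ where each $\mathcal N_i$ is obtained from $\mathcal N_{i-1}$ by one cherry reduction; it is maximal if $\mathcal N_k$ has no cherries and no reticulated cherries, and complete if $\mathcal N_k$ is a single vertex. $\mathcal N$ is an orchard network if it has a complete cherry-reduction sequence. *)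

From mathcomp Require Import all_boot.
Set Implicit Arguments. Unset Strict Implicit. Unset Printing Implicit Defensive.

Record net := Net { verts : seq nat; arcs : seq (nat * nat) }.

Definition indeg (N : net) (v : nat) : nat := count (fun e => e.2 == v) (arcs N).
Definition outdeg (N : net) (v : nat) : nat := count (fun e => e.1 == v) (arcs N).

Inductive dpath (N : net) : nat -> nat -> Prop :=
| dpath_arc u v : (u, v) \in arcs N -> dpath N u v
| dpath_cons u v w : (u, v) \in arcs N -> dpath N v w -> dpath N u w.

Definition acyclic (N : net) : Prop := forall v, ~ dpath N v v.

(* N is a phylogenetic network (on its set of leaves X = vertices of out-degree 0).
   No parallel arcs = arcs listed without repetition.  X is automatically
   non-empty and finite. *)
Definition is_network (N : net) : Prop :=
  uniq (verts N) /\ uniq (arcs N) /\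
  (forall e, e \in arcs N -> e.1 \in verts N /\ e.2 \in verts N) /\
  acyclic N /\
  ( (exists v, verts N = [:: v] /\ arcs N = [::])  (* |X| = 1, single vertex *)
  \/
    (exists r, r \in verts N /\ indeg N r = 0 /\ outdeg N r = 2 /\
       forall v, v \in verts N -> v <> r ->
         (indeg N v = 1 /\ outdeg N v = 0) \/
         (indeg N v = 1 /\ outdeg N v = 2) \/
         (indeg N v = 2 /\ outdeg N v = 1))).

Definition is_leaf (N : net) (x : nat) : Prop := x \in verts N /\ outdeg N x = 0.
Definition is_retic (N : net) (v : nat) : Prop := indeg N v = 2 /\ outdeg N v = 1.

Definition cherry_at (N : net) (a b p : nat) : Prop :=
  a <> b /\ is_leaf N a /\ is_leaf N b /\ (p, a) \in arcs N /\ (p, b) \in arcs N.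

Definition ret_cherry_at (N : net) (a b pa pb : nat) : Prop :=
  a <> b /\ is_leaf N a /\ is_leaf N b /\ (pa, a) \in arcs N /\ (pb, b) \in arcs N /\
  is_retic N pb /\ (pa, pb) \in arcs N.

Definition has_cherry (N : net) : Prop := exists a b p, cherry_at N a b p.
Definition has_ret_cherry (N : net) : Prop := exists a b pa pb, ret_cherry_at N a b pa pb.

(* N' is obtained from N by reducing b in a cherry {a,b}: delete b and suppress
   the common parent p (if p is the root, delete b and the root, leaving a). *)
Definition reduce_cherry (N : net) (b : nat) (N' : net) : Prop :=
  exists a p, cherry_at N a b p /\
  ( (indeg N p = 0 /\ verts N' = [:: a] /\ arcs N' = [::])
  \/
    (exists g, (g, p) \in arcs N /\
       uniq (verts N') /\ uniq (arcs N') /\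
       (forall x, x \in verts N' <-> (x \in verts N /\ x <> b /\ x <> p)) /\
       (forall e, e \in arcs N' <->
          (e = (g, a) \/ (e \in arcs N /\ e.1 <> p /\ e.2 <> p /\ e.2 <> b))))).

(* N' is obtained from N by cutting the reticulated cherry {a,b} (reticulation
   leaf b): delete the arc (pa,pb) and suppress pa and pb. *)
Definition cut_ret_cherry (N : net) (a b : nat) (N' : net) : Prop :=
  exists pa pb ga gb, ret_cherry_at N a b pa pb /\
    (ga, pa) \in arcs N /\ (gb, pb) \in arcs N /\ gb <> pa /\
    uniq (verts N') /\ uniq (arcs N') /\
    (forall x, x \in verts N' <-> (x \in verts N /\ x <> pa /\ x <> pb)) /\
    (forall e, e \in arcs N' <->
       (e = (ga, a) \/ e = (gb, b) \/
        (e \in arcs N /\ e.1 <> pa /\ e.2 <> pa /\ e.1 <> pb /\ e.2 <> pb))).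

Definition cherry_reduction (N N' : net) : Prop :=
  (exists b, reduce_cherry N b N') \/ (exists a b, cut_ret_cherry N a b N').

Definition reduction_seq (N : net) (Ns : nat -> net) (l : nat) : Prop :=
  Ns 0 = N /\ forall i, i < l -> cherry_reduction (Ns i) (Ns i.+1).

Definition single_vertex (N : net) : Prop :=
  exists v, verts N = [:: v] /\ arcs N = [::].

Definition maximal_seq (N : net) (Ns : nat -> net) (l : nat) : Prop :=
  reduction_seq N Ns l /\ ~ has_cherry (Ns l) /\ ~ has_ret_cherry (Ns l).

Definition complete_seq (N : net) (Ns : nat -> net) (l : nat) : Prop :=
  reduction_seq N Ns l /\ single_vertex (Ns l).

Definition orchard (N : net) : Prop :=
  is_network N /\ exists Ns l, complete_seq N Ns l.

From mathcomp Require Import all_boot.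
From Stdlib Require Import ClassicalDescription.
Set Implicit Arguments. Unset Strict Implicit. Unset Printing Implicit Defensive.

(* Cherry reductions are locally confluent.  If a network admits two different reductions,
   either they reduce the two leaves of one cherry, and the results differ only by exchanging
   those leaves, or each result admits one further reduction (the other one, or, for two
   reticulated cherries sharing their reticulation leaf, the reduction of the cherry created by
   the cut) and both end at the same network.  A cherry at the root admits no other reduction,
   since then every vertex is a child of the root.  By induction on the number of vertices,
   every cherry reduction of a network with a complete sequence leads to a network with a
   complete sequence.  Hence every term of a maximal sequence of an orchard network has a
   complete sequence; the last term has neither cherries nor reticulated cherries, so its
   complete sequence is empty and it is a single vertex. *)

Lemma uniq_size_le_count (T : eqType) (P : pred T) (s t : seq T) :
  uniq t -> {subset t <= s} -> all P t -> size t <= count P s.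
Proof.
move=> Ut Sts /allP Pt; rewrite -size_filter; apply: uniq_leq_size => // x xt.
by rewrite mem_filter Pt // Sts.
Qed.

Lemma sub_count_lt (T : eqType) (P Q : pred T) (s : seq T) x :
  subpred P Q -> x \in s -> Q x -> ~~ P x -> count P s < count Q s.
Proof.
move=> PQ; elim: s => //= y s IH; rewrite inE => /orP[/eqP<- Qx /negbTE Px|xs Qx Px].
  by rewrite Px Qx add1n ltnS sub_count.
by rewrite -addnS leq_add ?IH //; case Py: (P y) => //; rewrite PQ.
Qed.

Lemma count_surgery (T : eqType) (P F : pred T) (A R new : seq T) :
  uniq A -> uniq R -> {subset R <= A} -> {in A, forall e, ~~ F e = (e \in R)} ->
  count P new = count P R -> count P (new ++ filter F A) = count P A.
Proof.
move=> uA uR sRA hF eqPnew; rewrite count_cat eqPnew.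
have /permP -> : perm_eq R (filter (predC F) A).
  apply: uniq_perm => //; first exact: filter_uniq.
  move=> x; rewrite mem_filter /=; case xA: (x \in A); first by rewrite hF ?andbT.
  by rewrite andbF; apply: contraFF (@sRA x) xA.
by rewrite addnC -count_cat; apply/permP; rewrite perm_filterC.
Qed.

Lemma size_le_outdeg (N : net) v (cs : seq nat) : uniq (arcs N) -> uniq cs ->
  {in cs, forall x, (v, x) \in arcs N} -> size cs <= outdeg N v.
Proof.
move=> uA ucs hcs; rewrite -(size_map (pair v)).
apply: uniq_size_le_count; first by rewrite map_inj_uniq // => x y [].
  by move=> e /mapP [x /hcs ? ->].
by apply/allP => e /mapP [x _ ->] /=.
Qed.

Lemma size_le_indeg (N : net) v (cs : seq nat) : uniq (arcs N) -> uniq cs ->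
  {in cs, forall x, (x, v) \in arcs N} -> size cs <= indeg N v.
Proof.
move=> uA ucs hcs; rewrite -(size_map (pair^~ v)).
apply: uniq_size_le_count; first by rewrite map_inj_uniq // => x y [].
  by move=> e /mapP [x /hcs ? ->].
by apply/allP => e /mapP [x _ ->] /=.
Qed.

Lemma outdeg_gt0 (N : net) x y : (x, y) \in arcs N -> 0 < outdeg N x.
Proof. by move=> h; rewrite -has_count; apply/hasP; exists (x, y). Qed.

Lemma indeg_gt0 (N : net) x y : (x, y) \in arcs N -> 0 < indeg N y.
Proof. by move=> h; rewrite -has_count; apply/hasP; exists (x, y). Qed.

Lemma leaf_no_out_arc (N : net) a y : is_leaf N a -> (a, y) \in arcs N -> False.
Proof. by move=> [_ o0] /outdeg_gt0; rewrite o0. Qed.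

Lemma leaf_neq_tail (N : net) a u y : is_leaf N a -> (u, y) \in arcs N -> a <> u.
Proof. by move=> la h au; subst; exact: leaf_no_out_arc la h. Qed.

Definition degrees_classified (N : net) (r : nat) : Prop :=
  forall v, v \in verts N -> v <> r ->
    (indeg N v = 1 /\ outdeg N v = 0) \/ (indeg N v = 1 /\ outdeg N v = 2) \/
    (indeg N v = 2 /\ outdeg N v = 1).

(* A network with at least one arc, together with a name for its root. *)
Definition rooted_net (N : net) (r : nat) : Prop :=
  [/\ uniq (verts N), uniq (arcs N),
      (forall e, e \in arcs N -> e.1 \in verts N /\ e.2 \in verts N), acyclic N &
      [/\ r \in verts N, indeg N r = 0, outdeg N r = 2 & degrees_classified N r]].

Lemma network_rooted (N : net) : is_network N -> arcs N <> [::] -> exists r, rooted_net N r.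
Proof.
by move=> [uV [uA [ed [ac [[v [_ ->]]|[r [rV [ir [or cl]]]]]]]]] // _; exists r.
Qed.

Lemma rooted_network (N : net) r : rooted_net N r -> is_network N.
Proof.
by move=> [uV uA ed ac [rV ir or cl]]; do 4 (split=> //); right; exists r.
Qed.

Section RootedNet.
Variables (N : net) (r : nat).
Hypothesis hN : rooted_net N r.

Lemma arcs_uniq : uniq (arcs N). Proof. by case: hN. Qed.
Lemma verts_uniq : uniq (verts N). Proof. by case: hN. Qed.
Lemma arc_tail_vert x y : (x, y) \in arcs N -> x \in verts N.
Proof. by case: hN => _ _ e _ _ /e []. Qed.
Lemma arc_head_vert x y : (x, y) \in arcs N -> y \in verts N.
Proof. by case: hN => _ _ e _ _ /e []. Qed.
Lemma rooted_acyclic : acyclic N. Proof. by case: hN. Qed.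

Lemma arc_irrefl x y : (x, y) \in arcs N -> x <> y.
Proof. by move=> h xy; subst; apply: (rooted_acyclic (dpath_arc h)). Qed.

Lemma arc_asym x y : (x, y) \in arcs N -> (y, x) \in arcs N -> False.
Proof. by move=> h1 h2; apply: (rooted_acyclic (dpath_cons h1 (dpath_arc h2))). Qed.

Lemma vert_degrees v : v \in verts N ->
  [\/ v = r /\ indeg N v = 0 /\ outdeg N v = 2, indeg N v = 1 /\ outdeg N v = 0,
      indeg N v = 1 /\ outdeg N v = 2 | indeg N v = 2 /\ outdeg N v = 1].
Proof.
case: hN => _ _ _ _ [rV ir or cl] vV; have [->|vr] := eqVneq v r; first exact: Or41.
by case: (cl v vV (elimN eqP vr)) => [|[]]; [apply: Or42|apply: Or43|apply: Or44].
Qed.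

Lemma branch_degrees v x y : (v, x) \in arcs N -> (v, y) \in arcs N -> x <> y ->
  outdeg N v = 2 /\ indeg N v <= 1.
Proof.
move=> hx hy xy; have : 2 <= outdeg N v.
  apply: (size_le_outdeg (cs := [:: x; y])) arcs_uniq _ _.
    by rewrite /= inE andbT; apply/eqP.
  by move=> z; rewrite !inE => /orP[]/eqP->.
by case: (vert_degrees (arc_tail_vert hx)) => [[_ [-> ->]]|[-> ->]|[-> ->]|[-> ->]].
Qed.

Lemma branch_child v x y z : (v, x) \in arcs N -> (v, y) \in arcs N -> x <> y ->
  (v, z) \in arcs N -> z = x \/ z = y.
Proof.
move=> hx hy xy hz; have [o2 _] := branch_degrees hx hy xy.
have [zx|zx] := eqVneq z x; first by left.
have [zy|zy] := eqVneq z y; first by right.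
have : 3 <= outdeg N v.
  apply: (size_le_outdeg (cs := [:: x; y; z])) arcs_uniq _ _.
    by rewrite /= !inE !negb_or (eq_sym x z) (eq_sym y z) zx zy !andbT; apply/eqP.
  by move=> w; rewrite !inE => /or3P[]/eqP->.
by rewrite o2.
Qed.

Lemma indeg_le1_parent v x y : indeg N v <= 1 -> (x, v) \in arcs N -> (y, v) \in arcs N -> x = y.
Proof.
move=> h hx hy; apply/eqP/negPn/negP => xy.
have : 2 <= indeg N v.
  apply: (size_le_indeg (cs := [:: x; y])) arcs_uniq _ _; first by rewrite /= inE xy.
  by move=> z; rewrite !inE => /orP[]/eqP->.
by rewrite ltnNge h.
Qed.

Lemma branch_parent v x y u w : (v, x) \in arcs N -> (v, y) \in arcs N -> x <> y ->
  (u, v) \in arcs N -> (w, v) \in arcs N -> u = w.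
Proof. by move=> hx hy xy; case: (branch_degrees hx hy xy) => _; apply: indeg_le1_parent. Qed.

Lemma leaf_indeg1 a : is_leaf N a -> indeg N a = 1.
Proof. by move=> [aV o0]; case: (vert_degrees aV) => [[_ []]|[]|[]|[]]; rewrite o0. Qed.

Lemma leaf_parent a x y : is_leaf N a -> (x, a) \in arcs N -> (y, a) \in arcs N -> x = y.
Proof. by move=> la; apply: indeg_le1_parent; rewrite leaf_indeg1. Qed.

Lemma retic_child v x y : is_retic N v -> (v, x) \in arcs N -> (v, y) \in arcs N -> x = y.
Proof.
move=> [_ o1] hx hy; apply/eqP/negPn/negP => xy.
have : 2 <= outdeg N v.
  apply: (size_le_outdeg (cs := [:: x; y])) arcs_uniq _ _; first by rewrite /= inE xy.
  by move=> z; rewrite !inE => /orP[]/eqP->.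
by rewrite o1.
Qed.

Lemma retic_parent v x y z : is_retic N v -> (x, v) \in arcs N -> (y, v) \in arcs N ->
  x <> y -> (z, v) \in arcs N -> z = x \/ z = y.
Proof.
move=> [i2 _] hx hy xy hz.
have [zx|zx] := eqVneq z x; first by left.
have [zy|zy] := eqVneq z y; first by right.
have : 3 <= indeg N v.
  apply: (size_le_indeg (cs := [:: x; y; z])) arcs_uniq _ _.
    by rewrite /= !inE !negb_or (eq_sym x z) (eq_sym y z) zx zy !andbT; apply/eqP.
  by move=> w; rewrite !inE => /or3P[]/eqP->.
by rewrite i2.
Qed.

End RootedNet.

Lemma dpath_trans (N : net) u v w : dpath N u v -> dpath N v w -> dpath N u w.
Proof.
elim=> [x y h|x y z h _ IH] p; [exact: dpath_cons h p | exact: dpath_cons h (IH p)].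
Qed.

Lemma dpath_out_arc (N : net) u w : dpath N u w -> exists z, (u, z) \in arcs N.
Proof. by case=> [x y h|x y z h _]; eexists; exact: h. Qed.

Lemma sub_dpath (N M : net) : (forall x y, (x, y) \in arcs M -> dpath N x y) ->
  forall u v, dpath M u v -> dpath N u v.
Proof.
move=> H u v; elim=> [x y h|x y z h _ IH]; first exact: H.
exact: dpath_trans (H _ _ h) IH.
Qed.

(* Counting ancestors needs a boolean version of [dpath], obtained classically. *)
Definition dpathb (N : net) u v : bool :=
  if excluded_middle_informative (dpath N u v) then true else false.

Lemma dpathbP (N : net) u v : reflect (dpath N u v) (dpathb N u v).
Proof. by rewrite /dpathb; case: excluded_middle_informative => h; constructor. Qed.

Lemma parent_exists (N : net) r v : rooted_net N r -> v \in verts N -> v <> r ->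
  exists u, (u, v) \in arcs N.
Proof.
move=> hN vV vr; have : 0 < indeg N v by case: (vert_degrees hN vV) => [[]|[->]|[->]|[->]].
by rewrite -has_count => /hasP [[u w] h /= /eqP E]; subst; exists u.
Qed.

(* A parent has strictly fewer ancestors than its child, so walking up terminates at the root. *)
Lemma root_dpath (N : net) r v : rooted_net N r -> v \in verts N -> v <> r -> dpath N r v.
Proof.
move=> hN; pose anc v := count (dpathb N ^~ v) (verts N).
suff reach k : forall v, anc v < k -> v \in verts N -> v <> r -> dpath N r v by apply: reach.
elim: k => // k IH {}v hk vV vr; have [u hu] := parent_exists hN vV vr.
have lt : anc u < anc v.
  apply: (sub_count_lt (x := u)) (arc_tail_vert hN hu) _ _.
  - by move=> y /dpathbP h; apply/dpathbP; apply: dpath_trans h (dpath_arc hu).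
  - exact/dpathbP/dpath_arc.
  - by apply/dpathbP; apply: (rooted_acyclic hN).
have [ur|ur] := eqVneq u r; first by rewrite -ur; exact: dpath_arc.
exact: dpath_trans (IH u (leq_trans lt hk) (arc_tail_vert hN hu) (elimN eqP ur)) (dpath_arc hu).
Qed.

Lemma indeg0_root (N : net) r p : rooted_net N r -> p \in verts N -> indeg N p = 0 -> p = r.
Proof. by move=> hN pV i0; case: (vert_degrees hN pV) => [[]|[]|[]|[]]; rewrite i0. Qed.

(* If both children of the root are leaves, every vertex reachable from the root is a leaf. *)
Lemma root_cherry_no_path (N : net) r a b p g q y : rooted_net N r -> cherry_at N a b p ->
  indeg N p = 0 -> (g, q) \in arcs N -> (q, y) \in arcs N -> False.
Proof.
move=> hN [ab [la [lb [ha hb]]]] i0 hg hq.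
have pr := indeg0_root hN (arc_tail_vert hN ha) i0; subst p.
have qr : q <> r by move=> qr; subst; move: (indeg_gt0 hg); rewrite i0.
have leaf_child z : (r, z) \in arcs N -> is_leaf N z.
  by case/(branch_child hN ha hb ab) => ->.
have rq := root_dpath hN (arc_tail_vert hN hq) qr.
move: leaf_child hq; case: rq => [x z hz|x z w hz /dpath_out_arc [w' hw]] /(_ _ hz) lz.
  exact: leaf_no_out_arc.
by move=> _; exact: leaf_no_out_arc lz hw.
Qed.

Definition surgery (N : net) (kv : pred nat) (new : seq (nat * nat))
    (ka : pred (nat * nat)) : net :=
  Net (filter kv (verts N)) (new ++ filter ka (arcs N)).

Lemma mem_surgery_verts N kv new ka x :
  (x \in verts (surgery N kv new ka)) = kv x && (x \in verts N).
Proof. exact: mem_filter. Qed.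

Lemma mem_surgery_arcs N kv new ka e :
  (e \in arcs (surgery N kv new ka)) = (e \in new) || ka e && (e \in arcs N).
Proof. by rewrite mem_cat mem_filter. Qed.

Lemma surgery_verts_comm N kv1 n1 ka1 kv2 n2 ka2 :
  verts (surgery (surgery N kv1 n1 ka1) kv2 n2 ka2) =i
  verts (surgery (surgery N kv2 n2 ka2) kv1 n1 ka1).
Proof. by move=> x; rewrite !mem_surgery_verts !andbA (andbC (kv1 x)). Qed.

Lemma surgery_arcs_comm N kv1 n1 ka1 kv2 n2 ka2 : all ka2 n1 -> all ka1 n2 ->
  arcs (surgery (surgery N kv1 n1 ka1) kv2 n2 ka2) =i
  arcs (surgery (surgery N kv2 n2 ka2) kv1 n1 ka1).
Proof.
move=> /allP k21 /allP k12 e; rewrite !mem_surgery_arcs.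
have [n1e|n1e] := boolP (e \in n1); have [n2e|n2e] := boolP (e \in n2);
  rewrite /= ?(k21 e n1e) ?(k12 e n2e) ?orbT //=; exact: andbCA.
Qed.

Lemma rooted_net_transfer (N M : net) r : rooted_net N r ->
  uniq (verts M) -> uniq (arcs M) -> {subset verts M <= verts N} -> r \in verts M ->
  (forall e, e \in arcs M -> e.1 \in verts M /\ e.2 \in verts M) ->
  (forall x y, (x, y) \in arcs M -> dpath N x y) ->
  {in verts M, forall v, indeg M v = indeg N v /\ outdeg M v = outdeg N v} ->
  rooted_net M r.
Proof.
move=> [_ _ _ ac [_ ir or cl]] uV uA sMN rM ed paths deg; split=> //.
  by move=> v /(sub_dpath paths); apply: ac.
have [-> ->] := deg r rM; split=> // v vM vr; have [-> ->] := deg v vM.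
exact: cl (sMN v vM) vr.
Qed.

Definition reduce_keep (p b : nat) (e : nat * nat) : bool :=
  [&& e.1 != p, e.2 != p & e.2 != b].

Definition reduce_net (N : net) (a b p g : nat) : net :=
  surgery N (fun x => (x != b) && (x != p)) [:: (g, a)] (reduce_keep p b).

Lemma reduce_vertsP N a b p g x :
  x \in verts (reduce_net N a b p g) <-> x \in verts N /\ x <> b /\ x <> p.
Proof.
rewrite mem_surgery_verts; split; first by case/andP=> /andP[/eqP ? /eqP ?].
by case=> xN [/eqP xb /eqP xp]; rewrite xN xb xp.
Qed.

Lemma reduce_arcsP N a b p g e : e \in arcs (reduce_net N a b p g) <->
  e = (g, a) \/ (e \in arcs N /\ e.1 <> p /\ e.2 <> p /\ e.2 <> b).
Proof.
rewrite mem_surgery_arcs inE /reduce_keep; split.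
  by case/orP=> [/eqP ->|/andP[/and3P[/eqP ? /eqP ? /eqP ?] ?]]; [left|right].
case=> [->|[eN [/eqP ? [/eqP ? /eqP ?]]]]; first by rewrite eqxx.
by apply/orP; right; apply/andP; split=> //; apply/and3P.
Qed.

Section ReduceCherry.
Variables (N : net) (r a b p g : nat).
Hypotheses (hN : rooted_net N r) (ch : cherry_at N a b p) (hg : (g, p) \in arcs N).

Local Notation C := (reduce_net N a b p g).

Let vertsC x : x \in verts C <-> x \in verts N /\ x <> b /\ x <> p :=
  reduce_vertsP N a b p g x.

Let ab : a <> b. Proof. by case: ch. Defined.
Let la : is_leaf N a. Proof. by case: ch => _ []. Defined.
Let lb : is_leaf N b. Proof. by case: ch => _ [_ []]. Defined.
Let ha : (p, a) \in arcs N. Proof. by case: ch => _ [_ [_ []]]. Defined.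
Let hb : (p, b) \in arcs N. Proof. by case: ch => _ [_ [_ []]]. Defined.

Lemma cherry_child z : (p, z) \in arcs N -> z = a \/ z = b.
Proof. exact: (branch_child hN ha hb ab). Qed.

Lemma cherry_child_leaf z : (p, z) \in arcs N -> is_leaf N z.
Proof. by case/cherry_child => ->. Qed.

Lemma cherry_neq_grandparent x z w : (x, z) \in arcs N -> (z, w) \in arcs N -> x <> p.
Proof. by move=> hx hz xp; subst; exact: leaf_no_out_arc (cherry_child_leaf hx) hz. Qed.

Let removed_arcs :
  {in arcs N, forall e, ~~ reduce_keep p b e = (e \in [:: (g, p); (p, a); (p, b)])}.
Proof.
move=> [x y] h; rewrite /reduce_keep /= !inE !xpair_eqE !negb_and !negbK.
apply/idP/idP.
- case/or3P=> /eqP E; subst.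
  + by case: (cherry_child h) => ->; rewrite !eqxx !orbT.
  + by rewrite (branch_parent hN ha hb ab h hg) !eqxx.
  + by rewrite (leaf_parent hN lb h hb) !eqxx !orbT.
- by case/or3P=> /andP[/eqP-> /eqP->]; rewrite !eqxx ?orbT.
Defined.

Lemma reduce_net_degrees v : v \in verts C -> indeg C v = indeg N v /\ outdeg C v = outdeg N v.
Proof.
move/vertsC => [_ [/eqP vb /eqP vp]].
have uR : uniq [:: (g, p); (p, a); (p, b)].
  rewrite /= !inE !xpair_eqE !negb_or !negb_and.
  by rewrite (introN eqP (arc_irrefl hN hg)) (introN eqP ab) !orbT.
have sR : {subset [:: (g, p); (p, a); (p, b)] <= arcs N}.
  by move=> e; rewrite !inE => /or3P[]/eqP->.
split; apply: count_surgery (arcs_uniq hN) uR sR removed_arcs _ => /=.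
  by rewrite !(eq_sym _ v) (negbTE vp) (negbTE vb).
by rewrite !(eq_sym _ v) (negbTE vp).
Qed.

Lemma reduce_net_uniq : uniq (verts C) /\ uniq (arcs C).
Proof.
split; first exact: filter_uniq (verts_uniq hN).
rewrite /= filter_uniq ?(arcs_uniq hN) // andbT mem_filter.
by apply/negP => /andP[_ /(leaf_parent hN la ha) pg]; exact: (arc_irrefl hN hg (esym pg)).
Qed.

Lemma reduce_net_reduce_cherry : reduce_cherry N b C.
Proof.
have [uV uA] := reduce_net_uniq.
exists a, p; split=> //; right; exists g; do 3 split=> //.
by split=> ?; [apply: vertsC|apply: reduce_arcsP].
Qed.

Lemma reduce_net_rooted : rooted_net C r.
Proof.
have [uV uA] := reduce_net_uniq.
have [_ _ ed _ [rN ir or _]] := hN.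
apply: rooted_net_transfer hN uV uA _ _ _ _ reduce_net_degrees.
- by move=> x /vertsC[].
- apply/vertsC; split=> //; split=> [rb|rp].
    by case: lb => _; rewrite -rb or.
  by move: (indeg_gt0 hg); rewrite -rp ir.
- move=> [x y] /reduce_arcsP[[-> ->]|[eN [/= xp [yp yb]]]]; split=> /=; apply/vertsC.
  + split; first exact: (arc_tail_vert hN hg).
    by split; [exact: (nesym (leaf_neq_tail lb hg))|exact: (arc_irrefl hN hg)].
  + by split; [case: la|split; [exact: ab|exact: (nesym (arc_irrefl hN ha))]].
  + by split; [exact: (arc_tail_vert hN eN)|split=> //; exact: (nesym (leaf_neq_tail lb eN))].
  + by split; [exact: (arc_head_vert hN eN)|].
- move=> x y /reduce_arcsP[[-> ->]|[h _]]; last exact: dpath_arc.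
  exact: dpath_cons hg (dpath_arc ha).
Qed.

Lemma reduce_net_size : size (verts C) < size (verts N).
Proof.
rewrite size_filter -[size (verts N)]count_predT.
apply: (sub_count_lt (x := b)) => //; first by case: lb.
by rewrite /= eqxx.
Qed.

Lemma reduce_net_leaf x : is_leaf N x -> x <> b -> x <> p -> is_leaf C x.
Proof.
move=> [xN o0] xb xp; have xC : x \in verts C by apply/vertsC.
by split=> //; rewrite (reduce_net_degrees xC).2.
Qed.

Lemma reduce_net_keeps_cherry a2 b2 p2 g2 : cherry_at N a2 b2 p2 -> (g2, p2) \in arcs N ->
  p2 <> p -> [/\ cherry_at C a2 b2 p2, (g2, p2) \in arcs C & reduce_keep p b (g2, a2)].
Proof.
move=> [ab2 [la2 [lb2 [ha2 hb2]]]] hg2 p2p.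
have a2b : a2 <> b by move=> a2b; subst; exact: p2p (leaf_parent hN lb ha2 hb).
have b2b : b2 <> b by move=> b2b; subst; exact: p2p (leaf_parent hN lb hb2 hb).
have a2p := leaf_neq_tail la2 ha; have b2p := leaf_neq_tail lb2 ha.
have p2b := nesym (leaf_neq_tail lb ha2); have g2p := cherry_neq_grandparent hg2 ha2.
split; last by apply/and3P; split; apply/eqP.
- split=> //; split; first exact: reduce_net_leaf.
  split; first exact: reduce_net_leaf.
  by split; apply/reduce_arcsP; right.
- by apply/reduce_arcsP; right.
Qed.

Lemma reduce_net_keeps_ret_cherry a2 b2 pa pb ga gb : ret_cherry_at N a2 b2 pa pb ->
  (ga, pa) \in arcs N -> (gb, pb) \in arcs N ->
  [/\ ret_cherry_at C a2 b2 pa pb, (ga, pa) \in arcs C, (gb, pb) \in arcs C &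
      all (reduce_keep p b) [:: (ga, a2); (gb, b2)]].
Proof.
move=> [ab2 [la2 [lb2 [ha2 [hb2 [rt hp2]]]]]] hga hgb.
have pap := cherry_neq_grandparent hp2 hb2.
have pbp : pb <> p by move=> pbp; subst; exact: ab (retic_child hN rt ha hb).
have a2b : a2 <> b by move=> a2b; subst; exact: pap (leaf_parent hN lb ha2 hb).
have b2b : b2 <> b by move=> b2b; subst; exact: pbp (leaf_parent hN lb hb2 hb).
have a2p := leaf_neq_tail la2 ha; have b2p := leaf_neq_tail lb2 ha.
have pab := nesym (leaf_neq_tail lb ha2); have pbb := nesym (leaf_neq_tail lb hb2).
have gap := cherry_neq_grandparent hga ha2; have gbp := cherry_neq_grandparent hgb hb2.
have pbC : pb \in verts C by apply/vertsC; split=> //; exact: (arc_tail_vert hN hb2).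
split; last by rewrite /= andbT; apply/andP; split; apply/and3P; split; apply/eqP.
- split=> //; split; first exact: reduce_net_leaf.
  split; first exact: reduce_net_leaf.
  split; first by apply/reduce_arcsP; right.
  split; first by apply/reduce_arcsP; right.
  split; last by apply/reduce_arcsP; right.
  by case: rt; rewrite /is_retic (reduce_net_degrees pbC).1 (reduce_net_degrees pbC).2.
- by apply/reduce_arcsP; right.
- by apply/reduce_arcsP; right.
Qed.

End ReduceCherry.

Definition cut_keep (pa pb : nat) (e : nat * nat) : bool :=
  [&& e.1 != pa, e.2 != pa, e.1 != pb & e.2 != pb].

Definition cut_net (N : net) (a b pa pb ga gb : nat) : net :=
  surgery N (fun x => (x != pa) && (x != pb)) [:: (ga, a); (gb, b)] (cut_keep pa pb).

Lemma cut_vertsP N a b pa pb ga gb x :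
  x \in verts (cut_net N a b pa pb ga gb) <-> x \in verts N /\ x <> pa /\ x <> pb.
Proof.
rewrite mem_surgery_verts; split; first by case/andP=> /andP[/eqP ? /eqP ?].
by case=> xN [/eqP xa /eqP xb]; rewrite xN xa xb.
Qed.

Lemma cut_arcsP N a b pa pb ga gb e : e \in arcs (cut_net N a b pa pb ga gb) <->
  e = (ga, a) \/ e = (gb, b) \/
  (e \in arcs N /\ e.1 <> pa /\ e.2 <> pa /\ e.1 <> pb /\ e.2 <> pb).
Proof.
rewrite mem_surgery_arcs !inE /cut_keep; split.
  case/orP=> [/orP[/eqP ->|/eqP ->]|/andP[/and4P[/eqP ? /eqP ? /eqP ? /eqP ?] ?]].
  - by left.
  - by right; left.
  - by right; right.
case=> [->|[->|[? [/eqP ? [/eqP ? [/eqP ? /eqP ?]]]]]]; rewrite ?eqxx ?orbT //.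
by apply/orP; right; apply/andP; split=> //; apply/and4P.
Qed.

Section CutRetCherry.
Variables (N : net) (r a b pa pb ga gb : nat).
Hypotheses (hN : rooted_net N r) (rc : ret_cherry_at N a b pa pb).
Hypotheses (hga : (ga, pa) \in arcs N) (hgb : (gb, pb) \in arcs N) (gbpa : gb <> pa).

Local Notation C := (cut_net N a b pa pb ga gb).

Let vertsC x : x \in verts C <-> x \in verts N /\ x <> pa /\ x <> pb :=
  cut_vertsP N a b pa pb ga gb x.

Let ab : a <> b. Proof. by case: rc. Defined.
Let la : is_leaf N a. Proof. by case: rc => _ []. Defined.
Let lb : is_leaf N b. Proof. by case: rc => _ [_ []]. Defined.
Let ha : (pa, a) \in arcs N. Proof. by case: rc => _ [_ [_ []]]. Defined.
Let hb : (pb, b) \in arcs N. Proof. by case: rc => _ [_ [_ [_ []]]]. Defined.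
Let rt : is_retic N pb. Proof. by case: rc => _ [_ [_ [_ [_ []]]]]. Defined.
Let hp : (pa, pb) \in arcs N. Proof. by case: rc => _ [_ [_ [_ [_ []]]]]. Defined.
Let apb : a <> pb. Proof. exact: (leaf_neq_tail la hb). Defined.

Let pa_child z : (pa, z) \in arcs N -> z = a \/ z = pb.
Proof. exact: (branch_child hN ha hp apb). Defined.

Let pb_child z : (pb, z) \in arcs N -> z = b.
Proof. by move=> hz; exact: (retic_child hN rt hz hb). Defined.

Let removed_arcs : {in arcs N, forall e,
  ~~ cut_keep pa pb e = (e \in [:: (ga, pa); (pa, a); (pa, pb); (gb, pb); (pb, b)])}.
Proof.
move=> [x y] h; rewrite /cut_keep /= !inE !xpair_eqE !negb_and !negbK.
apply/idP/idP.
- case/or4P=> /eqP E; subst.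
  + by case: (pa_child h) => ->; rewrite !eqxx !orbT.
  + by rewrite (branch_parent hN ha hp apb h hga) !eqxx.
  + by rewrite (pb_child h) !eqxx !orbT.
  + by case: (retic_parent hN rt hp hgb (nesym gbpa) h) => ->; rewrite !eqxx !orbT.
- by case/or4P=> [|||/orP[]] /andP[/eqP-> /eqP->]; rewrite !eqxx ?orbT.
Defined.

Lemma cut_net_degrees v : v \in verts C -> indeg C v = indeg N v /\ outdeg C v = outdeg N v.
Proof.
move/vertsC => [_ [/eqP vpa /eqP vpb]].
have uR : uniq [:: (ga, pa); (pa, a); (pa, pb); (gb, pb); (pb, b)].
  rewrite /= !inE !xpair_eqE !negb_or !negb_and.
  rewrite (introN eqP (arc_irrefl hN hga)) (introN eqP (arc_irrefl hN ha)).
  rewrite (introN eqP (arc_irrefl hN hp)) (introN eqP (arc_irrefl hN hb)).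
  rewrite (introN eqP apb) (introN eqP (nesym gbpa)).
  by rewrite (introN eqP (nesym (leaf_neq_tail lb ha))) !orbT.
have sR : {subset [:: (ga, pa); (pa, a); (pa, pb); (gb, pb); (pb, b)] <= arcs N}.
  by move=> e; rewrite !inE => /or4P[| | |/orP[]]/eqP->.
split; apply: count_surgery (arcs_uniq hN) uR sR removed_arcs _ => /=;
  by rewrite !(eq_sym _ v) (negbTE vpa) (negbTE vpb).
Qed.

Lemma cut_net_uniq : uniq (verts C) /\ uniq (arcs C).
Proof.
split; first exact: filter_uniq (verts_uniq hN).
rewrite /= filter_uniq ?(arcs_uniq hN) // andbT !inE !mem_filter xpair_eqE negb_or.
rewrite negb_and (introN eqP ab) orbT /= /cut_keep /=.
apply/andP; split; apply/negP => /andP[/and4P[/eqP gapa _ /eqP gbpb _]].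
  by move/(leaf_parent hN la ha) => E; exact: gapa (esym E).
by move/(leaf_parent hN lb hb) => E; exact: gbpb (esym E).
Qed.

Lemma cut_net_cut_ret_cherry : cut_ret_cherry N a b C.
Proof.
have [uV uA] := cut_net_uniq.
exists pa, pb, ga, gb; do 4 (split=> //); do 2 split=> //.
by split=> ?; [apply: vertsC|apply: cut_arcsP].
Qed.

Lemma cut_net_rooted : rooted_net C r.
Proof.
have [uV uA] := cut_net_uniq.
have [_ _ ed _ [rN ir _ _]] := hN.
have gapb : ga <> pb by move=> E; subst; exact: (arc_asym hN hp hga).
have bpa : b <> pa := leaf_neq_tail lb ha.
apply: rooted_net_transfer hN uV uA _ _ _ _ cut_net_degrees.
- by move=> x /vertsC[].
- apply/vertsC; split=> //; split=> [rpa|rpb].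
    by move: (indeg_gt0 hga); rewrite -rpa ir.
  by move: (indeg_gt0 hgb); rewrite -rpb ir.
- move=> [x y] /cut_arcsP[[-> ->]|[[-> ->]|[eN [/= xpa [ypa [xpb ypb]]]]]];
    split=> /=; apply/vertsC.
  + by split; [exact: (arc_tail_vert hN hga)|split; [exact: (arc_irrefl hN hga)|]].
  + by split; [case: la|split; [exact: (nesym (arc_irrefl hN ha))|]].
  + by split; [exact: (arc_tail_vert hN hgb)|split; [|exact: (arc_irrefl hN hgb)]].
  + by split; [case: lb|split; [|exact: (nesym (arc_irrefl hN hb))]].
  + by split; [exact: (arc_tail_vert hN eN)|].
  + by split; [exact: (arc_head_vert hN eN)|].
- move=> x y /cut_arcsP[[-> ->]|[[-> ->]|[h _]]]; last exact: dpath_arc.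
    exact: dpath_cons hga (dpath_arc ha).
  exact: dpath_cons hgb (dpath_arc hb).
Qed.

Lemma cut_net_size : size (verts C) < size (verts N).
Proof.
rewrite size_filter -[size (verts N)]count_predT.
apply: (sub_count_lt (x := pa)) => //; first exact: (arc_tail_vert hN ha).
by rewrite /= eqxx.
Qed.

Lemma cut_net_leaf x : is_leaf N x -> x <> pa -> x <> pb -> is_leaf C x.
Proof.
move=> [xN o0] xpa xpb; have xC : x \in verts C by apply/vertsC.
by split=> //; rewrite (cut_net_degrees xC).2.
Qed.

Lemma cut_net_keeps_cherry a1 b1 p1 g1 : cherry_at N a1 b1 p1 -> (g1, p1) \in arcs N ->
  [/\ cherry_at C a1 b1 p1, (g1, p1) \in arcs C & cut_keep pa pb (g1, a1)].
Proof.
move=> c1 hg1; have [ab1 [la1 [lb1 [ha1 hb1]]]] := c1.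
have a1pa := leaf_neq_tail la1 ha; have a1pb := leaf_neq_tail la1 hb.
have b1pa := leaf_neq_tail lb1 ha; have b1pb := leaf_neq_tail lb1 hb.
have p1pa := nesym (cherry_neq_grandparent hN c1 hp hb).
have p1pb : p1 <> pb by move=> E; rewrite E in ha1 hb1; exact: ab1 (retic_child hN rt ha1 hb1).
have g1pa : g1 <> pa.
  move=> E; rewrite E in hg1; case: (pa_child hg1) => // E'.
  by rewrite E' in ha1; exact: leaf_no_out_arc la ha1.
have g1pb : g1 <> pb.
  by move=> E; rewrite E in hg1; rewrite (pb_child hg1) in ha1; exact: leaf_no_out_arc lb ha1.
split; last by apply/and4P; split; apply/eqP.
- split=> //; split; first exact: cut_net_leaf.
  split; first exact: cut_net_leaf.
  by split; apply/cut_arcsP; right; right.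
- by apply/cut_arcsP; right; right.
Qed.

Lemma cut_net_keeps_ret_cherry a2 b2 pa2 pb2 ga2 gb2 : ret_cherry_at N a2 b2 pa2 pb2 ->
  (ga2, pa2) \in arcs N -> (gb2, pb2) \in arcs N -> b2 <> b ->
  [/\ ret_cherry_at C a2 b2 pa2 pb2, (ga2, pa2) \in arcs C, (gb2, pb2) \in arcs C &
      all (cut_keep pa pb) [:: (ga2, a2); (gb2, b2)]].
Proof.
move=> [ab2 [la2 [lb2 [ha2 [hb2 [rt2 hp2]]]]]] hga2 hgb2 b2b.
have pb2pb : pb2 <> pb by move=> E; rewrite E in hb2; exact: b2b (pb_child hb2).
have pa2pb : pa2 <> pb.
  by move=> E; rewrite E in hp2; rewrite (pb_child hp2) in hb2; exact: leaf_no_out_arc lb hb2.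
have pb2pa : pb2 <> pa.
  by move=> E; rewrite E in rt2; exact: apb (retic_child hN rt2 ha hp).
have pa2pa : pa2 <> pa.
  move=> E; rewrite E in hp2; case: (pa_child hp2) => // E'.
  by rewrite E' in hb2; exact: leaf_no_out_arc la hb2.
have ga2pa : ga2 <> pa.
  move=> E; rewrite E in hga2; case: (pa_child hga2) => // E'.
  by rewrite E' in ha2; exact: leaf_no_out_arc la ha2.
have ga2pb : ga2 <> pb.
  by move=> E; rewrite E in hga2; rewrite (pb_child hga2) in ha2; exact: leaf_no_out_arc lb ha2.
have gb2pa : gb2 <> pa.
  move=> E; rewrite E in hgb2; case: (pa_child hgb2) => // E'.
  by rewrite E' in hb2; exact: leaf_no_out_arc la hb2.
have gb2pb : gb2 <> pb.
  by move=> E; rewrite E in hgb2; rewrite (pb_child hgb2) in hb2; exact: leaf_no_out_arc lb hb2.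
have a2pa := leaf_neq_tail la2 ha; have a2pb := leaf_neq_tail la2 hb.
have b2pa := leaf_neq_tail lb2 ha; have b2pb := leaf_neq_tail lb2 hb.
have pb2C : pb2 \in verts C by apply/vertsC; split=> //; exact: (arc_tail_vert hN hb2).
split; last by rewrite /= andbT; apply/andP; split; apply/and4P; split; apply/eqP.
- split=> //; split; first exact: cut_net_leaf.
  split; first exact: cut_net_leaf.
  split; first by apply/cut_arcsP; right; right.
  split; first by apply/cut_arcsP; right; right.
  split; last by apply/cut_arcsP; right; right.
  by case: rt2; rewrite /is_retic (cut_net_degrees pb2C).1 (cut_net_degrees pb2C).2.
- by apply/cut_arcsP; right; right.
- by apply/cut_arcsP; right; right.
Qed.

(* When [gb] is the parent of a second leaf [a2] in a reticulated cherry with the same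
   reticulation leaf [b], cutting turns [{a2, b}] into an ordinary cherry. *)
Lemma cut_net_shared_cherry a2 ga2 : ret_cherry_at N a2 b gb pb -> (ga2, gb) \in arcs N ->
  [/\ cherry_at C a2 b gb, (ga2, gb) \in arcs C & reduce_keep pa b (ga2, a2)].
Proof.
move=> [ab2 [la2 [_ [ha2 _]]]] hga2.
have gbpb := arc_irrefl hN hgb.
have [a2pa a2pb] := (leaf_neq_tail la2 ha, leaf_neq_tail la2 hb).
have ga2pa : ga2 <> pa.
  move=> E; rewrite E in hga2; case: (pa_child hga2) => // E'.
  by rewrite E' in ha2; exact: leaf_no_out_arc la ha2.
have ga2pb : ga2 <> pb.
  by move=> E; rewrite E in hga2; rewrite (pb_child hga2) in ha2; exact: leaf_no_out_arc lb ha2.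
split; last by apply/and3P; split; apply/eqP.
- split=> //; split; first exact: cut_net_leaf.
  split; first exact: (cut_net_leaf lb (leaf_neq_tail lb ha) (nesym (arc_irrefl hN hb))).
  by split; apply/cut_arcsP; [right; right|right; left].
- by apply/cut_arcsP; right; right.
Qed.

End CutRetCherry.

Definition dup_free (N : net) : Prop := uniq (verts N) /\ uniq (arcs N).

Definition same_net (N M : net) : Prop :=
  [/\ dup_free N, dup_free M, verts N =i verts M & arcs N =i arcs M].

Lemma rooted_dup_free (N : net) r : rooted_net N r -> dup_free N.
Proof. by case. Qed.

Section SameNet.
Variables (N M : net).
Hypothesis NM : same_net N M.

Lemma same_net_sym : same_net M N.
Proof. by case: NM => dN dM hV hA; split=> // x; rewrite ?hV ?hA. Qed.

Lemma same_net_count (P : pred (nat * nat)) : count P (arcs N) = count P (arcs M).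
Proof. by case: NM => [[_ uN] [_ uM] _ hA]; apply/permP/uniq_perm. Qed.

Lemma same_net_indeg v : indeg N v = indeg M v. Proof. exact: same_net_count. Qed.
Lemma same_net_outdeg v : outdeg N v = outdeg M v. Proof. exact: same_net_count. Qed.

Lemma same_net_leaf x : is_leaf N x -> is_leaf M x.
Proof. by have [_ _ hV _] := NM; rewrite /is_leaf -hV -same_net_outdeg. Qed.

Lemma same_net_retic x : is_retic N x -> is_retic M x.
Proof. by rewrite /is_retic same_net_indeg same_net_outdeg. Qed.

Lemma same_net_cherry a b p : cherry_at N a b p -> cherry_at M a b p.
Proof.
have [_ _ _ hA] := NM; case=> [ab [la [lb [ha hb]]]].
by split=> //; split; [exact: same_net_leaf la|split; [exact: same_net_leaf lb|rewrite -!hA]].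
Qed.

Lemma same_net_ret_cherry a b pa pb : ret_cherry_at N a b pa pb -> ret_cherry_at M a b pa pb.
Proof.
have [_ _ _ hA] := NM; case=> [ab [la [lb [ha [hb [rt hp]]]]]].
split=> //; split; first exact: same_net_leaf la.
split; first exact: same_net_leaf lb.
by rewrite -!hA; do 2 split=> //; split=> //; exact: same_net_retic rt.
Qed.

Lemma same_net_reduction N' : cherry_reduction N N' -> cherry_reduction M N'.
Proof.
have [_ _ hV hA] := NM.
case=> [[b [a [p [ch red]]]]|[a [b [pa [pb [ga [gb [rc [h1 [h2 [h3 [h4 [h5 [h6 h7]]]]]]]]]]]]]].
- left; exists b, a, p; split; first exact: same_net_cherry.
  case: red => [[i0 rest]|[g [hg [u1 [u2 [hv ha]]]]]]; first by left; rewrite -same_net_indeg.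
  by right; exists g; rewrite -hA; do 3 split=> //; split=> ?; rewrite -?hV -?hA.
- right; exists a, b, pa, pb, ga, gb; split; first exact: same_net_ret_cherry.
  by rewrite -!hA; do 5 split=> //; split=> ?; rewrite -?hV -?hA.
Qed.

Lemma same_net_single : single_vertex N -> single_vertex M.
Proof.
case: NM => [[uN _] [uM _] hV hA] [v [ev ea]]; exists v; split.
  have /perm_size := uniq_perm uN uM hV; rewrite ev.
  case E: (verts M) => [|w [|]] //= _; have := hV w; rewrite ev E !inE eqxx.
  by move/eqP ->.
by case E: (arcs M) => [|e s] //; have := hA e; rewrite E ea inE eqxx.
Qed.

Lemma same_net_rooted r : rooted_net N r -> rooted_net M r.
Proof.
have [_ [uV uA] hV hA] := NM; case=> _ _ ed ac [rV ir or cl].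
have arcsMN x y : (x, y) \in arcs M -> dpath N x y by rewrite -hA; apply: dpath_arc.
split=> //.
- by move=> e; rewrite -hA -!hV; apply: ed.
- by move=> v /(sub_dpath arcsMN); apply: ac.
- split; rewrite -?hV -?same_net_indeg -?same_net_outdeg //.
  by move=> v; rewrite -hV -same_net_indeg -same_net_outdeg; apply: cl.
Qed.

End SameNet.

Inductive completable : net -> Prop :=
| completable_single N : single_vertex N -> completable N
| completable_step N N' : cherry_reduction N N' -> completable N' -> completable N.

Lemma same_net_completable N M : same_net N M -> completable N -> completable M.
Proof.
move=> NM cN; case: cN NM => [K s|K K' st c] KM.
  exact/completable_single/(same_net_single KM).
exact: completable_step (same_net_reduction KM st) c.
Qed.

Lemma complete_seq_completable N Ns l : complete_seq N Ns l -> completable N.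
Proof.
move=> [[<- st] s]; suff H n i : i + n = l -> completable (Ns i) by apply: (H l 0).
elim: n i => [|n IH] i E; first by rewrite addn0 in E; subst; apply: completable_single.
by apply: completable_step (st i _) (IH i.+1 _); rewrite -E ?addSnnS // addnS ltnS leq_addr.
Qed.

Lemma cherry_reduction_arcs N N' : cherry_reduction N N' -> arcs N <> [::].
Proof.
by case=> [[b [a [p [[_ [_ [_ [h _]]]] _]]]]|[a [b [pa [pb [ga [gb [[_ [_ [_ [h _]]]] _]]]]]]]] E;
  rewrite E in h.
Qed.

Lemma single_vertex_network N : single_vertex N -> is_network N.
Proof.
move=> [v [ev ea]]; rewrite /is_network ev ea; do 3 split=> //.
by split; [move=> u /dpath_out_arc []; rewrite ea|left; exists v].
Qed.

Lemma cherry_reduction_cases N r N' : rooted_net N r -> cherry_reduction N N' ->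
  [\/ exists a b p, [/\ cherry_at N a b p, indeg N p = 0 & single_vertex N'],
      exists a b p g, [/\ cherry_at N a b p, (g, p) \in arcs N &
                          same_net N' (reduce_net N a b p g)] |
      exists a b pa pb ga gb, [/\ ret_cherry_at N a b pa pb, (ga, pa) \in arcs N,
        (gb, pb) \in arcs N, gb <> pa & same_net N' (cut_net N a b pa pb ga gb)]].
Proof.
move=> hN; case=> [[b [a [p [ch [[i0 [ev ea]]|[g [hg [u1 [u2 [hv ha]]]]]]]]]]|
                  [a [b [pa [pb [ga [gb [rc [h1 [h2 [h3 [u1 [u2 [hv ha]]]]]]]]]]]]]].
- by apply: Or31; exists a, b, p; split=> //; exists a.
- apply: Or32; exists a, b, p, g; split=> //; split=> //.
  + exact: rooted_dup_free (reduce_net_rooted hN ch hg).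
  + by move=> x; apply/idP/idP => [/hv/reduce_vertsP|/reduce_vertsP/hv].
  + by move=> e; apply/idP/idP => [/ha/reduce_arcsP|/reduce_arcsP/ha].
- apply: Or33; exists a, b, pa, pb, ga, gb; split=> //; split=> //.
  + exact: rooted_dup_free (cut_net_rooted hN rc h1 h2 h3).
  + by move=> x; apply/idP/idP => [/hv/cut_vertsP|/cut_vertsP/hv].
  + by move=> e; apply/idP/idP => [/ha/cut_arcsP|/cut_arcsP/ha].
Qed.

Lemma cherry_reduction_network N N' : is_network N -> cherry_reduction N N' -> is_network N'.
Proof.
move=> hN st; have [r hr] := network_rooted hN (cherry_reduction_arcs st).
case: (cherry_reduction_cases hr st) => [[a [b [p [_ _ s]]]]|[a [b [p [g [ch hg E]]]]]|
  [a [b [pa [pb [ga [gb [rc h1 h2 h3 E]]]]]]]].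
- exact: single_vertex_network.
- exact: rooted_network (same_net_rooted (same_net_sym E) (reduce_net_rooted hr ch hg)).
- exact: rooted_network (same_net_rooted (same_net_sym E) (cut_net_rooted hr rc h1 h2 h3)).
Qed.

Section Relabel.
Variable h : nat -> nat.
Hypothesis hK : involutive h.

Definition relabel_arc (e : nat * nat) : nat * nat := (h e.1, h e.2).
Definition relabel_net (N : net) : net := Net (map h (verts N)) (map relabel_arc (arcs N)).

Let h_inj : injective h. Proof. exact: inv_inj hK. Defined.
Let relabel_arcK : involutive relabel_arc.
Proof. by case=> x y; rewrite /relabel_arc /= !hK. Defined.

Lemma relabel_eq x y : h x = y <-> x = h y.
Proof. by split=> [<-|->]; rewrite hK. Qed.

Lemma relabel_arc_eq x y u v : (h x, h y) = (u, v) <-> (x, y) = (h u, h v).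
Proof. by split=> [[<- <-]|[-> ->]]; rewrite !hK. Qed.

Lemma mem_relabel_verts N x : (x \in verts (relabel_net N)) = (h x \in verts N).
Proof. by rewrite /= -{1}(hK x) (mem_map h_inj). Qed.

Lemma mem_relabel_arcs N e : (e \in arcs (relabel_net N)) = (relabel_arc e \in arcs N).
Proof. by rewrite /= -{1}(relabel_arcK e) (mem_map (inv_inj relabel_arcK)). Qed.

Lemma relabel_arc_in N x y : ((h x, h y) \in arcs (relabel_net N)) = ((x, y) \in arcs N).
Proof. by rewrite mem_relabel_arcs /relabel_arc /= !hK. Qed.

Lemma relabel_vert_in N x : (h x \in verts (relabel_net N)) = (x \in verts N).
Proof. by rewrite mem_relabel_verts hK. Qed.

Lemma relabel_indeg N v : indeg (relabel_net N) (h v) = indeg N v.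
Proof. by rewrite /indeg count_map; apply: eq_count => e /=; rewrite (inj_eq h_inj). Qed.

Lemma relabel_outdeg N v : outdeg (relabel_net N) (h v) = outdeg N v.
Proof. by rewrite /outdeg count_map; apply: eq_count => e /=; rewrite (inj_eq h_inj). Qed.

Lemma relabel_leaf N x : is_leaf N x -> is_leaf (relabel_net N) (h x).
Proof. by case=> xN o0; split; rewrite ?relabel_vert_in ?relabel_outdeg. Qed.

Lemma relabel_retic N x : is_retic N x -> is_retic (relabel_net N) (h x).
Proof. by case=> i2 o1; split; rewrite ?relabel_indeg ?relabel_outdeg. Qed.

Lemma relabel_neq x y : x <> y -> h x <> h y.
Proof. by move=> xy /h_inj. Qed.

Lemma relabel_cherry N a b p :
  cherry_at N a b p -> cherry_at (relabel_net N) (h a) (h b) (h p).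
Proof.
case=> [ab [la [lb [ha hb]]]]; split; first exact: relabel_neq.
by split; [exact: relabel_leaf|split; [exact: relabel_leaf|rewrite !relabel_arc_in]].
Qed.

Lemma relabel_ret_cherry N a b pa pb : ret_cherry_at N a b pa pb ->
  ret_cherry_at (relabel_net N) (h a) (h b) (h pa) (h pb).
Proof.
case=> [ab [la [lb [ha [hb [rt hp]]]]]]; split; first exact: relabel_neq.
split; first exact: relabel_leaf.
split; first exact: relabel_leaf.
by rewrite !relabel_arc_in; do 2 split=> //; split=> //; exact: relabel_retic.
Qed.

Lemma relabel_dup_free N : dup_free N -> dup_free (relabel_net N).
Proof. by case=> uV uA; split; rewrite map_inj_uniq //; exact: inv_inj. Qed.

Lemma relabel_reduction N N' :
  cherry_reduction N N' -> cherry_reduction (relabel_net N) (relabel_net N').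
Proof.
case=> [[b [a [p [ch red]]]]|[a [b [pa [pb [ga [gb [rc [h1 [h2 [h3 [u1 [u2 [hv ha]]]]]]]]]]]]]].
- left; exists (h b), (h a), (h p); split; first exact: relabel_cherry.
  case: red => [[i0 [ev ea]]|[g [hg [u1 [u2 [hv ha]]]]]].
    by left; rewrite relabel_indeg /relabel_net ev ea.
  right; exists (h g); rewrite relabel_arc_in; split=> //.
  have [u1' u2'] := relabel_dup_free (conj u1 u2); do 2 split=> //; split.
  + move=> x; rewrite !mem_relabel_verts; have := hv (h x).
    have := relabel_eq x b; have := relabel_eq x p; tauto.
  + move=> [x y]; rewrite !mem_relabel_arcs /relabel_arc /=; have := ha (h x, h y) => /=.
    have := relabel_arc_eq x y g a; have := relabel_eq x p; have := relabel_eq y p.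
    have := relabel_eq y b; tauto.
- right; exists (h a), (h b), (h pa), (h pb), (h ga), (h gb).
  split; first exact: relabel_ret_cherry.
  rewrite !relabel_arc_in; do 2 split=> //; split; first exact: relabel_neq.
  have [u1' u2'] := relabel_dup_free (conj u1 u2); do 2 split=> //; split.
  + move=> x; rewrite !mem_relabel_verts; have := hv (h x).
    have := relabel_eq x pa; have := relabel_eq x pb; tauto.
  + move=> [x y]; rewrite !mem_relabel_arcs /relabel_arc /=; have := ha (h x, h y) => /=.
    have := relabel_arc_eq x y ga a; have := relabel_arc_eq x y gb b.
    have := relabel_eq x pa; have := relabel_eq y pa; have := relabel_eq x pb.
    have := relabel_eq y pb; tauto.
Qed.

Lemma relabel_completable N : completable N -> completable (relabel_net N).
Proof.
elim=> [{}N [v [ev ea]]|{}N N' st _ IH]; last exact: completable_step (relabel_reduction st) IH.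
by apply: completable_single; exists (h v); rewrite /relabel_net ev ea.
Qed.

End Relabel.

Definition swap (s t x : nat) : nat := if x == s then t else if x == t then s else x.

Lemma swapK s t : involutive (swap s t).
Proof.
move=> x; rewrite /swap; have [->|xs] := eqVneq x s; first by rewrite eqxx; case: eqVneq.
have [->|xt] := eqVneq x t; first by rewrite eqxx.
by rewrite (negbTE xs) (negbTE xt).
Qed.

Lemma reduce_net_swap N r a b p g : rooted_net N r -> cherry_at N a b p -> (g, p) \in arcs N ->
  same_net (reduce_net N b a p g) (relabel_net (swap a b) (reduce_net N a b p g)).
Proof.
move=> hN ch hg; have [ab [la [lb [ha hb]]]] := ch.
have chba : cherry_at N b a p by split; [exact: nesym|].
have aN : a \in verts N by case: la.
have bN : b \in verts N by case: lb.
have [ap bp] := (arc_irrefl hN ha, arc_irrefl hN hb).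
have [ga gb] := (nesym (leaf_neq_tail la hg), nesym (leaf_neq_tail lb hg)).
split.
- exact: rooted_dup_free (reduce_net_rooted hN chba hg).
- exact: (relabel_dup_free (swapK a b) (rooted_dup_free (reduce_net_rooted hN ch hg))).
- move=> x; rewrite (mem_relabel_verts (swapK a b)) /reduce_net !mem_surgery_verts /swap.
  have [->|xa] := eqVneq x a; first by rewrite eqxx.
  have [->|xb] := eqVneq x b; last by rewrite xb.
  by rewrite aN bN !(introN eqP ab) !(introN eqP (nesym ap)) !(introN eqP (nesym bp)).
- move=> [x y]; rewrite (mem_relabel_arcs (swapK a b)) /reduce_net !mem_surgery_arcs.
  rewrite /relabel_arc /swap.
  rewrite /reduce_keep /= !inE !xpair_eqE.
  have outF z w : is_leaf N z -> ((z, w) \in arcs N) = false.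
    by move=> lz; apply/negP => /(leaf_no_out_arc lz).
  have agF : (a == g) = false by apply/eqP/nesym.
  have bgF : (b == g) = false by apply/eqP/nesym.
  have [->|xa] := eqVneq x a; first by rewrite ?eqxx !outF // agF bgF !andbF.
  have [->|xb] := eqVneq x b; first by rewrite ?eqxx !outF // agF bgF !andbF.
  have abF : (a == b) = false by apply/eqP.
  have baF : (b == a) = false by apply/eqP/nesym.
  have [->|ya] := eqVneq y a; first by rewrite ?eqxx abF baF /= !andbF.
  have [->|yb] := eqVneq y b; last by rewrite (negbTE ya) (negbTE yb) !andbF.
  rewrite !eqxx ?abF ?baF !andbT /=; have [->|xg] //= := eqVneq x g.
  case E1: ((x, b) \in arcs N); first by rewrite (leaf_parent hN lb E1 hb) eqxx.
  case E2: ((x, a) \in arcs N); first by rewrite (leaf_parent hN la E2 ha) eqxx.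
  by rewrite !andbF.
Qed.

Definition joinable (M M' : net) : Prop :=
  exists K K', [/\ cherry_reduction M K, cherry_reduction M' K' & same_net K K'].

Lemma commuting_surgeries_joinable N kv1 n1 ka1 kv2 n2 ka2 :
  let S1 M := surgery M kv1 n1 ka1 in let S2 M := surgery M kv2 n2 ka2 in
  cherry_reduction (S1 N) (S2 (S1 N)) -> cherry_reduction (S2 N) (S1 (S2 N)) ->
  dup_free (S2 (S1 N)) -> dup_free (S1 (S2 N)) -> all ka2 n1 -> all ka1 n2 ->
  joinable (S1 N) (S2 N).
Proof.
move=> S1 S2 st1 st2 d1 d2 k21 k12; exists (S2 (S1 N)), (S1 (S2 N)); split=> //.
by split=> //; [apply: surgery_verts_comm|apply: surgery_arcs_comm].
Qed.

Lemma reduce_reduce_joinable N r a1 b1 p1 g1 a2 b2 p2 g2 : rooted_net N r ->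
  cherry_at N a1 b1 p1 -> (g1, p1) \in arcs N ->
  cherry_at N a2 b2 p2 -> (g2, p2) \in arcs N -> p1 <> p2 ->
  joinable (reduce_net N a1 b1 p1 g1) (reduce_net N a2 b2 p2 g2).
Proof.
move=> hN c1 hg1 c2 hg2 p12.
have [c2' hg2' k12] := reduce_net_keeps_cherry hN c1 hg1 c2 hg2 (nesym p12).
have [c1' hg1' k21] := reduce_net_keeps_cherry hN c2 hg2 c1 hg1 p12.
have n1 := reduce_net_rooted hN c1 hg1; have n2 := reduce_net_rooted hN c2 hg2.
apply: commuting_surgeries_joinable; rewrite /= ?k12 ?k21 //.
- by left; exists b2; exact: reduce_net_reduce_cherry n1 c2' hg2'.
- by left; exists b1; exact: reduce_net_reduce_cherry n2 c1' hg1'.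
- exact: rooted_dup_free (reduce_net_rooted n1 c2' hg2').
- exact: rooted_dup_free (reduce_net_rooted n2 c1' hg1').
Qed.

Lemma reduce_cut_joinable N r a1 b1 p1 g1 a2 b2 pa pb ga gb : rooted_net N r ->
  cherry_at N a1 b1 p1 -> (g1, p1) \in arcs N ->
  ret_cherry_at N a2 b2 pa pb -> (ga, pa) \in arcs N -> (gb, pb) \in arcs N -> gb <> pa ->
  joinable (reduce_net N a1 b1 p1 g1) (cut_net N a2 b2 pa pb ga gb).
Proof.
move=> hN c1 hg1 rc hga hgb gbpa.
have [rc' hga' hgb' k12] := reduce_net_keeps_ret_cherry hN c1 hg1 rc hga hgb.
have [c1' hg1' k21] := cut_net_keeps_cherry hN rc hga hgb gbpa c1 hg1.
have n1 := reduce_net_rooted hN c1 hg1; have n2 := cut_net_rooted hN rc hga hgb gbpa.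
apply: commuting_surgeries_joinable k12; rewrite /= ?k21 //.
- by right; exists a2, b2; exact: cut_net_cut_ret_cherry n1 rc' hga' hgb' gbpa.
- by left; exists b1; exact: reduce_net_reduce_cherry n2 c1' hg1'.
- exact: rooted_dup_free (cut_net_rooted n1 rc' hga' hgb' gbpa).
- exact: rooted_dup_free (reduce_net_rooted n2 c1' hg1').
Qed.

Lemma cut_cut_joinable N r a1 b1 pa1 pb1 ga1 gb1 a2 b2 pa2 pb2 ga2 gb2 : rooted_net N r ->
  ret_cherry_at N a1 b1 pa1 pb1 -> (ga1, pa1) \in arcs N -> (gb1, pb1) \in arcs N -> gb1 <> pa1 ->
  ret_cherry_at N a2 b2 pa2 pb2 -> (ga2, pa2) \in arcs N -> (gb2, pb2) \in arcs N -> gb2 <> pa2 ->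
  b1 <> b2 -> joinable (cut_net N a1 b1 pa1 pb1 ga1 gb1) (cut_net N a2 b2 pa2 pb2 ga2 gb2).
Proof.
move=> hN rc1 hga1 hgb1 gp1 rc2 hga2 hgb2 gp2 b12.
have [rc2' hga2' hgb2' k12] :=
  cut_net_keeps_ret_cherry hN rc1 hga1 hgb1 gp1 rc2 hga2 hgb2 (nesym b12).
have [rc1' hga1' hgb1' k21] := cut_net_keeps_ret_cherry hN rc2 hga2 hgb2 gp2 rc1 hga1 hgb1 b12.
have n1 := cut_net_rooted hN rc1 hga1 hgb1 gp1; have n2 := cut_net_rooted hN rc2 hga2 hgb2 gp2.
apply: commuting_surgeries_joinable => //.
- by right; exists a2, b2; exact: cut_net_cut_ret_cherry n1 rc2' hga2' hgb2' gp2.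
- by right; exists a1, b1; exact: cut_net_cut_ret_cherry n2 rc1' hga1' hgb1' gp1.
- exact: rooted_dup_free (cut_net_rooted n1 rc2' hga2' hgb2' gp2).
- exact: rooted_dup_free (cut_net_rooted n2 rc1' hga1' hgb1' gp1).
Qed.

Lemma reduce_cut_keepC pa1 pa2 pb b e :
  reduce_keep pa2 b e && cut_keep pa1 pb e = reduce_keep pa1 b e && cut_keep pa2 pb e.
Proof.
rewrite /reduce_keep /cut_keep.
by case: (e.1 == pa1); case: (e.1 == pa2); case: (e.2 == pa1); case: (e.2 == pa2);
   case: (e.1 == pb); case: (e.2 == pb); case: (e.2 == b).
Qed.

(* Two reticulated cherries sharing the reticulation leaf [b]: cutting either one turns the
   other into a cherry, and reducing [b] there removes the same four vertices. *)
Lemma cut_cut_shared_joinable N r a1 a2 b pa1 pa2 pb ga1 ga2 : rooted_net N r ->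
  ret_cherry_at N a1 b pa1 pb -> (ga1, pa1) \in arcs N ->
  ret_cherry_at N a2 b pa2 pb -> (ga2, pa2) \in arcs N -> pa1 <> pa2 ->
  joinable (cut_net N a1 b pa1 pb ga1 pa2) (cut_net N a2 b pa2 pb ga2 pa1).
Proof.
move=> hN rc1 hga1 rc2 hga2 p12.
have hp1 : (pa1, pb) \in arcs N by case: rc1 => _ [_ [_ [_ [_ []]]]].
have hp2 : (pa2, pb) \in arcs N by case: rc2 => _ [_ [_ [_ [_ []]]]].
have [c2 hg2 k2] := cut_net_shared_cherry hN rc1 hga1 hp2 (nesym p12) rc2 hga2.
have [c1 hg1 k1] := cut_net_shared_cherry hN rc2 hga2 hp1 p12 rc1 hga1.
have n1 := cut_net_rooted hN rc1 hga1 hp2 (nesym p12).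
have n2 := cut_net_rooted hN rc2 hga2 hp1 p12.
exists (reduce_net (cut_net N a1 b pa1 pb ga1 pa2) a2 b pa2 ga2),
       (reduce_net (cut_net N a2 b pa2 pb ga2 pa1) a1 b pa1 ga1).
split; [by left; exists b; exact: reduce_net_reduce_cherry n1 c2 hg2|
        by left; exists b; exact: reduce_net_reduce_cherry n2 c1 hg1|].
split; [exact: rooted_dup_free (reduce_net_rooted n1 c2 hg2)|
        exact: rooted_dup_free (reduce_net_rooted n2 c1 hg1)| |].
- move=> x; rewrite !mem_surgery_verts.
  by case: (x == b); case: (x == pa1); case: (x == pa2); case: (x == pb).
- move=> e; rewrite !mem_surgery_arcs !inE.
  have [->|e1] := eqVneq e (ga1, a1); first by rewrite k1 orbT.
  have [->|e2] := eqVneq e (ga2, a2); first by rewrite k2 orbT.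
  have [->|e3] := eqVneq e (pa1, b); first by rewrite /reduce_keep /= !eqxx /= ?andbF.
  have [->|e4] := eqVneq e (pa2, b); first by rewrite /reduce_keep /= !eqxx /= ?andbF.
  by rewrite /= andbA reduce_cut_keepC -andbA.
Qed.

Lemma joinable_sym M M' : joinable M M' -> joinable M' M.
Proof. by case=> [K [K' [s1 s2 E]]]; exists K', K; split=> //; apply: same_net_sym. Qed.

Definition confluent (M M' : net) : Prop := (completable M -> completable M') \/ joinable M M'.

Lemma reduce_reduce_confluent N r a1 b1 p1 g1 a2 b2 p2 g2 : rooted_net N r ->
  cherry_at N a1 b1 p1 -> (g1, p1) \in arcs N -> cherry_at N a2 b2 p2 -> (g2, p2) \in arcs N ->
  confluent (reduce_net N a1 b1 p1 g1) (reduce_net N a2 b2 p2 g2).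
Proof.
move=> hN c1 hg1 c2 hg2.
have [p12|/eqP p12] := eqVneq p1 p2; last first.
  by right; exact: reduce_reduce_joinable hN c1 hg1 c2 hg2 p12.
subst p2; have [ab1 [_ [_ [ha1 hb1]]]] := c1; have [ab2 [_ [_ [ha2 hb2]]]] := c2.
have g12 := branch_parent hN ha1 hb1 ab1 hg1 hg2; subst g2; left.
case: (branch_child hN ha1 hb1 ab1 ha2) => E; subst a2.
  by case: (branch_child hN ha1 hb1 ab1 hb2) => E; subst b2.
case: (branch_child hN ha1 hb1 ab1 hb2) => E; subst b2; last by [].
move/(relabel_completable (swapK a1 b1)); apply: same_net_completable.
exact: same_net_sym (reduce_net_swap hN c1 hg1).
Qed.

Lemma cut_cut_confluent N r a1 b1 pa1 pb1 ga1 gb1 a2 b2 pa2 pb2 ga2 gb2 : rooted_net N r ->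
  ret_cherry_at N a1 b1 pa1 pb1 -> (ga1, pa1) \in arcs N -> (gb1, pb1) \in arcs N -> gb1 <> pa1 ->
  ret_cherry_at N a2 b2 pa2 pb2 -> (ga2, pa2) \in arcs N -> (gb2, pb2) \in arcs N -> gb2 <> pa2 ->
  confluent (cut_net N a1 b1 pa1 pb1 ga1 gb1) (cut_net N a2 b2 pa2 pb2 ga2 gb2).
Proof.
move=> hN rc1 hga1 hgb1 gp1 rc2 hga2 hgb2 gp2.
have [b12|/eqP b12] := eqVneq b1 b2; last first.
  by right; exact: cut_cut_joinable hN rc1 hga1 hgb1 gp1 rc2 hga2 hgb2 gp2 b12.
subst b2; have [_ [la1 [lb [ha1 [hb1 [rt hp1]]]]]] := rc1.
have [_ [la2 [_ [ha2 [hb2 [_ hp2]]]]]] := rc2.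
have E := leaf_parent hN lb hb1 hb2; subst pb2.
have a1pb1 := leaf_neq_tail la1 hb1.
have [a12|/eqP a12] := eqVneq a1 a2.
  subst a2; have E := leaf_parent hN la1 ha1 ha2; subst pa2.
  have E := branch_parent hN ha1 hp1 a1pb1 hga1 hga2; subst ga2.
  by case: (retic_parent hN rt hp1 hgb1 (nesym gp1) hgb2) => E; subst; [case: gp2|left].
have pa12 : pa1 <> pa2.
  move=> E; rewrite -E in ha2; case: (branch_child hN ha1 hp1 a1pb1 ha2) => E'; first exact: a12.
  exact: leaf_neq_tail la2 hb1 E'.
case: (retic_parent hN rt hp1 hgb1 (nesym gp1) hp2) => E; first by case: pa12.
case: (retic_parent hN rt hp2 hgb2 (nesym gp2) hp1) => E'; first by case: pa12.
by subst; right; exact: cut_cut_shared_joinable hN rc1 hga1 rc2 hga2 pa12.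
Qed.

Lemma cherry_reductions_confluent N r M N' : rooted_net N r ->
  cherry_reduction N M -> cherry_reduction N N' ->
  single_vertex N' \/ exists M0 N0, [/\ same_net M M0, same_net N' N0, rooted_net M0 r,
                                        size (verts M0) < size (verts N) & confluent M0 N0].
Proof.
move=> hN stM st.
case: (cherry_reduction_cases hN st) => [[a2 [b2 [p2 [_ _ s]]]]|[a2 [b2 [p2 [g2 [c2 h2 E2]]]]]|
  [a2 [b2 [pa2 [pb2 [ga2 [gb2 [rc2 x2 y2 z2 E2]]]]]]]]; first by left.
all: case: (cherry_reduction_cases hN stM) =>
  [[a1 [b1 [p1 [c1 i1 _]]]]|[a1 [b1 [p1 [g1 [c1 h1 E1]]]]]|
  [a1 [b1 [pa1 [pb1 [ga1 [gb1 [rc1 x1 y1 z1 E1]]]]]]]].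
- by case: c2 => [_ [_ [_ [ha2 _]]]]; case: (root_cherry_no_path hN c1 i1 h2 ha2).
- right; exists (reduce_net N a1 b1 p1 g1), (reduce_net N a2 b2 p2 g2).
  split=> //; [exact: reduce_net_rooted hN c1 h1|exact: reduce_net_size g1 c1|].
  exact: reduce_reduce_confluent hN c1 h1 c2 h2.
- right; exists (cut_net N a1 b1 pa1 pb1 ga1 gb1), (reduce_net N a2 b2 p2 g2).
  split=> //; [exact: cut_net_rooted hN rc1 x1 y1 z1|exact: cut_net_size ga1 gb1 hN rc1|].
  by right; apply/joinable_sym; exact: reduce_cut_joinable hN c2 h2 rc1 x1 y1 z1.
- by case: rc2 => [_ [_ [_ [ha2 _]]]]; case: (root_cherry_no_path hN c1 i1 x2 ha2).
- right; exists (reduce_net N a1 b1 p1 g1), (cut_net N a2 b2 pa2 pb2 ga2 gb2).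
  split=> //; [exact: reduce_net_rooted hN c1 h1|exact: reduce_net_size g1 c1|].
  by right; exact: reduce_cut_joinable hN c1 h1 rc2 x2 y2 z2.
- right; exists (cut_net N a1 b1 pa1 pb1 ga1 gb1), (cut_net N a2 b2 pa2 pb2 ga2 gb2).
  split=> //; [exact: cut_net_rooted hN rc1 x1 y1 z1|exact: cut_net_size ga1 gb1 hN rc1|].
  exact: cut_cut_confluent hN rc1 x1 y1 z1 rc2 x2 y2 z2.
Qed.

Lemma completable_reduction n N N' : size (verts N) < n ->
  is_network N -> completable N -> cherry_reduction N N' -> completable N'.
Proof.
elim: n N N' => // n IH N N' sz hN cN st.
case: cN st hN sz => [{}N [v [_ ea]]|{}N M stM cM] st hN sz.
  by case: (cherry_reduction_arcs st).
have [r hr] := network_rooted hN (cherry_reduction_arcs st).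
case: (cherry_reductions_confluent hr stM st) => [s|[M0 [N0 [EM EN hM0 szM0 conf]]]].
  exact: completable_single.
apply: same_net_completable (same_net_sym EN) _.
have cM0 := same_net_completable EM cM.
case: conf => [transfer|[K [K' [sK sK' EK]]]]; first exact: transfer cM0.
apply: completable_step sK' (same_net_completable EK _).
exact: IH M0 K (leq_trans szM0 sz) (rooted_network hM0) cM0 sK.
Qed.

Theorem proposition4p1 (N : net) (Ns : nat -> net) (l : nat) :
  orchard N -> maximal_seq N Ns l -> single_vertex (Ns l).
Proof.
move=> [hN [Ms [m cs]]] [[N0 st] [nc nr]].
have hNs i : i <= l -> is_network (Ns i) /\ completable (Ns i).
  elim: i => [|i IH] il; first by rewrite N0; split=> //; exact: complete_seq_completable cs.
  have [hi ci] := IH (ltnW il); have s := st i il.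
  by split; [exact: cherry_reduction_network hi s|exact: completable_reduction (ltnSn _) hi ci s].
have [_ cl] := hNs l (leqnn l).
case: cl nc nr => [K s|K K' [[b [a [p [ch _]]]]|[a [b [pa [pb [_ [_ [rc _]]]]]]]] _] nc nr //.
- by case: nc; exists a, b, p.
- by case: nr; exists a, b, pa, pb.
Qed.
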